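(* Let $k\subset K$ be differential fields of characteristic zero with the same field of constants $C$, assumed algebraically closed, and assume there is $x\in k$ with $x'=1$. Let $f,g\in K$ be iterated integrals over $k$. If $f$ and $g$ are algebraically dependent over $k$, then there exist $u,v\in k$, not both zero, such that $uf+vg\in k$.
   Context: An element $f\in K$ is an iterated integral over $k$ if $f^{(m)}\in k$ for some $m\in\mathbb{N}$. Here $k$ need not be algebraically closed. *)

From HB Require Import structures.
From mathcomp Require Import all_boot all_order all_algebra.
Set Implicit Arguments. Unset Strict Implicit. Unset Printing Implicit Defensive.
Import Order.TTheory GRing.Theory Num.Theory.
Local Open Scope ring_scope.

Definition is_derivation (K : fieldType) (D : K -> K) : Prop :=
  (forall a b, D (a + b) = D a + D b) /\
  (forall a b, D (a * b) = D a * b + a * D b).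

Definition char0 (K : fieldType) : Prop := forall n : nat, (n.+1)%:R != 0 :> K.

Definition is_diff_subfield (K : fieldType) (D : K -> K) (k : pred K) : Prop :=
  [/\ 0 \in k, 1 \in k &
      (forall a b, a \in k -> b \in k -> a + b \in k)] /\
  [/\
      (forall a, a \in k -> - a \in k),
      (forall a b, a \in k -> b \in k -> a * b \in k),
      (forall a, a \in k -> a^-1 \in k) &
      (forall a, a \in k -> D a \in k)].

Definition is_const (K : fieldType) (D : K -> K) (c : K) : Prop := D c = 0.

Definition consts_alg_closed (K : fieldType) (D : K -> K) : Prop :=
  forall p : {poly K}, (forall i, is_const D p`_i) -> (1 < size p)%N ->
    exists c, is_const D c /\ root p c.

Definition iterated_integral (K : fieldType) (D : K -> K) (k : pred K) (f : K) : Prop :=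
  exists m : nat, iter m D f \in k.

(* f and g are algebraically dependent over k: some nonzero P in k[X,Y]
   (represented in {poly {poly K}} with all coefficients in k) has P(f,g)=0,
   where the inner variable is X (evaluated at f) and the outer one Y (at g). *)
Definition alg_dependent2 (K : fieldType) (k : pred K) (f g : K) : Prop :=
  exists P : {poly {poly K}},
    [/\ P != 0, (forall i j, (P`_i)`_j \in k) & (P.[g%:P]).[f] = 0].

(* Integration by parts along [x' = 1] writes an iterated integral over [k] as
   a [k]-linear combination of first integrals, i.e. elements [J] with [J'] in
   [k]. The key fact is that if [Y'] lies in a differential field [E] containing
   all constants but [Y] does not, then [Y] is transcendental over [E] and every
   [z] in [E(Y)] with [z'] in [E] has the form [e + c Y] with [e] in [E] and [c]
   constant. Adjoining first integrals one at a time thus yields a tower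
   [k(Y_1, ..., Y_r)], each [Y_i] transcendental over the previous field, in
   which [f] and [g] are [k]-affine in the [Y_i]: [f = A + p Y_r] and
   [g = B + q Y_r] with [A], [B] affine in the lower [Y_i]. If [p = q = 0] we
   descend. Otherwise [P(f, g) = 0] forces [P] to vanish on the whole line
   [(A + p t, B + q t)]; at a point whose first coordinate is a suitable integer
   this makes [B - (q/p) A] algebraic over [k], and an element affine in the
   tower and algebraic over [k] lies in [k]. Finally [g - (q/p) f = B - (q/p) A]. *)

From HB Require Import structures.
From mathcomp Require Import all_boot all_order all_algebra.
From Stdlib Require Import Classical.
From mathcomp Require Import ring zify.
Set Implicit Arguments. Unset Strict Implicit. Unset Printing Implicit Defensive.
Import GRing.Theory.
Local Open Scope ring_scope.

(** * Subrings and polynomials over a predicate *)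

Record subring_pred (R : comNzRingType) (E : R -> Prop) : Prop := SubringPred {
  subring0 : E 0;
  subring1 : E 1;
  subringD : forall a b, E a -> E b -> E (a + b);
  subringN : forall a, E a -> E (- a);
  subringM : forall a b, E a -> E b -> E (a * b) }.

Definition poly_over (R : comNzRingType) (E : R -> Prop) (p : {poly R}) :=
  forall i, E p`_i.

Lemma poly_over_sub (R : comNzRingType) (E F : R -> Prop) p :
  (forall a, E a -> F a) -> poly_over E p -> poly_over F p.
Proof. by move=> EF hp i; apply: EF. Qed.

Lemma poly_over_map (R S : comNzRingType) (E : R -> Prop) (F : S -> Prop)
    (f : R -> S) p :
  f 0 = 0 -> (forall a, E a -> F (f a)) -> poly_over E p -> poly_over F (map_poly f p).
Proof. by move=> f0 hf hp i; rewrite coef_map_id0 //; apply: hf. Qed.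

Section Subring.
Variables (R : comNzRingType) (E : R -> Prop).
Hypothesis hE : subring_pred E.

Lemma subringB a b : E a -> E b -> E (a - b).
Proof. by move=> ha hb; apply: (subringD hE) => //; apply: (subringN hE). Qed.

Lemma subring_sum (I : Type) (r : seq I) (P : pred I) (F : I -> R) :
  (forall i, P i -> E (F i)) -> E (\sum_(i <- r | P i) F i).
Proof.
by move=> EF; elim/big_ind: _ => //; [apply: subring0 hE | apply: subringD hE].
Qed.

Lemma subring_nat n : E n%:R.
Proof.
elim: n => [|n IHn]; first exact: subring0 hE.
by rewrite -addn1 natrD; apply: (subringD hE) => //; apply: subring1 hE.
Qed.

Lemma subringMn a n : E a -> E (a *+ n).
Proof.
by move=> ha; rewrite -mulr_natr; apply: (subringM hE) => //; apply: subring_nat.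
Qed.

Lemma subringX a n : E a -> E (a ^+ n).
Proof.
move=> ha; elim: n => [|n IHn]; first by rewrite expr0; apply: subring1 hE.
by rewrite exprS; apply: (subringM hE).
Qed.

End Subring.

Section PolyOver.
Variables (R : comNzRingType) (E : R -> Prop).
Hypothesis hE : subring_pred E.

Lemma poly_overC c : E c -> poly_over E c%:P.
Proof. by move=> hc i; rewrite coefC; case: (i == 0)%N => //; apply: subring0 hE. Qed.

Lemma poly_overX : poly_over E 'X.
Proof.
by move=> i; rewrite coefX; case: (i == 1)%N; [apply: subring1 hE | apply: subring0 hE].
Qed.

Lemma poly_over_subring : subring_pred (poly_over E).
Proof.
split.
- by move=> i; rewrite coef0; apply: subring0 hE.
- by apply: poly_overC; apply: subring1 hE.
- by move=> p q hp hq i; rewrite coefD; apply: (subringD hE).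
- by move=> p hp i; rewrite coefN; apply: (subringN hE).
- move=> p q hp hq i; rewrite coefM.
  by apply: (subring_sum hE) => j _; apply: (subringM hE).
Qed.

Lemma poly_overZ a p : E a -> poly_over E p -> poly_over E (a *: p).
Proof. by move=> ha hp i; rewrite coefZ; apply: (subringM hE). Qed.

Lemma poly_over_deriv p : poly_over E p -> poly_over E p^`().
Proof. by move=> hp i; rewrite coef_deriv; apply: (subringMn hE). Qed.

Lemma poly_over_horner p y : poly_over E p -> E y -> E p.[y].
Proof.
move=> hp hy; rewrite horner_coef; apply: (subring_sum hE) => i _.
by apply: (subringM hE) => //; apply: (subringX hE).
Qed.

Lemma poly_over_comp p q : poly_over E p -> poly_over E q -> poly_over E (p \Po q).
Proof.
move=> hp hq; rewrite comp_polyE; apply: (subring_sum poly_over_subring) => i _.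
by apply: poly_overZ => //; apply: (subringX poly_over_subring).
Qed.

End PolyOver.

Lemma horner2E (R : comNzRingType) (P : {poly {poly R}}) x y :
  P.[y, x] = (map_poly (horner_eval x) P).[y].
Proof. by rewrite -[y in RHS](hornerC y x) -horner_evalE horner_map. Qed.

Lemma horner2_comp (R : comNzRingType) (P : {poly {poly R}}) (L1 L2 : {poly R}) t :
  ((map_poly (comp_poly L1) P).[L2]).[t] = P.[L2.[t], L1.[t]].
Proof.
rewrite horner2E -horner_evalE -horner_map -map_poly_comp.
by congr horner; apply: eq_map_poly => c /=; rewrite !horner_evalE horner_comp.
Qed.

Section Char0.
Variable K : fieldType.
Hypothesis hchar : char0 K.

Lemma natr_inj : injective (fun n : nat => n%:R : K).
Proof.
have neq m n : (m < n)%N -> m%:R != n%:R :> K.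
  move=> lt; rewrite eq_sym -subr_eq0 -natrB ?(ltnW lt) //.
  by rewrite -(prednK (_ : 0 < n - m)%N) ?subn_gt0.
by move=> m n /= e; apply/eqP; case: (ltngtP m n) => // /neq; rewrite e eqxx.
Qed.

Lemma exists_nat_nonroot (p : {poly K}) : p != 0 -> exists n : nat, ~~ root p n%:R.
Proof.
move=> p0; suff /allPn [_ /mapP [n _ ->]] :
    ~~ all (root p) [seq n%:R | n <- iota 0 (size p)] by exists n.
move: p0; apply: contraNN => rootsp; apply/eqP; apply: (roots_geq_poly_eq0 rootsp).
  by rewrite map_inj_uniq ?iota_uniq //; apply: natr_inj.
by rewrite size_map size_iota.
Qed.

Lemma exists_nat_map_horner_eval_neq0 (P : {poly {poly K}}) :
  P != 0 -> exists n : nat, map_poly (horner_eval n%:R) P != 0.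
Proof.
rewrite -lead_coef_eq0 => l0; have [n ln] := exists_nat_nonroot l0.
exists n; apply: contraNneq ln => Pn0; apply/rootP.
by rewrite lead_coefE -horner_evalE -coef_map Pn0 coef0.
Qed.

End Char0.

(** * Derivations *)

Section Derivation.
Variables (K : fieldType) (D : K -> K).
Hypothesis hD : is_derivation D.

Lemma derD a b : D (a + b) = D a + D b. Proof. exact: hD.1. Qed.
Lemma derM a b : D (a * b) = D a * b + a * D b. Proof. exact: hD.2. Qed.

Lemma der0 : D 0 = 0.
Proof. by apply: (addrI (D 0)); rewrite -derD !addr0. Qed.

Lemma der1 : D 1 = 0.
Proof.
have := derM 1 1; rewrite !mulr1 mul1r => h.
by apply: (addrI (D 1)); rewrite -h addr0.
Qed.

Lemma derN a : D (- a) = - D a.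
Proof. by apply/eqP; rewrite -addr_eq0 -derD addNr der0. Qed.

Lemma derB a b : D (a - b) = D a - D b. Proof. by rewrite derD derN. Qed.

Lemma der_nat n : D n%:R = 0.
Proof. by elim: n => [|n IHn]; rewrite ?der0 // -addn1 natrD derD IHn der1 addr0. Qed.

Lemma der_sum (I : Type) (r : seq I) (P : pred I) (F : I -> K) :
  D (\sum_(i <- r | P i) F i) = \sum_(i <- r | P i) D (F i).
Proof. by elim/big_rec2: _ => [|i y x _ <-]; rewrite ?der0 ?derD. Qed.

Lemma derMr_const c a : D c = 0 -> D (c * a) = c * D a.
Proof. by move=> dc; rewrite derM dc mul0r add0r. Qed.

Lemma derMl_const c a : D c = 0 -> D (a * c) = D a * c.
Proof. by move=> dc; rewrite derM dc mulr0 addr0. Qed.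

Lemma derX a n : D (a ^+ n.+1) = n.+1%:R * a ^+ n * D a.
Proof.
elim: n => [|n IHn]; first by rewrite expr1 expr0 mulr1 mul1r.
by rewrite exprS derM IHn -[n.+2]addn1 natrD exprS; ring.
Qed.

Lemma derV a : a != 0 -> D a^-1 = - D a / (a * a).
Proof.
move=> a0; apply: (mulfI a0); apply: (addrI (D a * a^-1)).
by rewrite -derM mulfV // der1; field.
Qed.

Lemma der_div a b : b != 0 -> D (a / b) = (D a * b - a * D b) / (b * b).
Proof. by move=> b0; rewrite derM derV //; field. Qed.

Lemma derV_const c : D c = 0 -> D c^-1 = 0.
Proof.
have [->|c0 dc] := eqVneq c 0; first by rewrite invr0.
by rewrite derV // dc oppr0 mul0r.
Qed.

Lemma der_divn_const c n : D c = 0 -> D (c / n%:R) = 0.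
Proof. by move=> dc; rewrite derMl_const ?derV_const ?der_nat // dc mul0r. Qed.

(* The derivation of [{poly K}] extending [D] with ['X' = b]. *)
Definition pder (b : K) (p : {poly K}) := map_poly D p + b *: p^`().

Lemma coef_pder b p i : (pder b p)`_i = D p`_i + b * (p`_i.+1 *+ i.+1).
Proof. by rewrite coefD coef_map_id0 ?der0 // coefZ coef_deriv. Qed.

Lemma der_horner p y : D p.[y] = (pder (D y) p).[y].
Proof.
elim/poly_ind: p => [|p c IHp].
  by rewrite /pder map_poly0 deriv0 scaler0 addr0 !horner0 der0.
have map_MXaddC : map_poly D (p * 'X + c%:P) = map_poly D p * 'X + (D c)%:P.
  apply/polyP => i; rewrite coef_map_id0 ?der0 // !coefD !coefMX !coefC.
  by case: i => [|i] /=; rewrite ?add0r // coef_map_id0 ?der0 // !addr0.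
rewrite /pder map_MXaddC derivMXaddC hornerMXaddC derD derM IHp /pder !hornerE.
ring.
Qed.

Lemma size_pder b p : (size (pder b p) <= size p)%N.
Proof.
apply/leq_sizeP => j hj.
by rewrite coef_pder !nth_default ?der0 ?mul0rn ?mulr0 ?addr0 // ltnW.
Qed.

Lemma size_pder_lt b p :
  p != 0 -> D (lead_coef p) = 0 -> (size (pder b p) < size p)%N.
Proof.
move=> p0 dl; have sp : (0 < size p)%N by rewrite size_poly_gt0.
rewrite -(prednK sp) ltnS; apply/leq_sizeP => j hj.
rewrite coef_pder [p`_j.+1]nth_default ?mul0rn ?mulr0 ?addr0; last first.
  by rewrite -(prednK sp) ltnS.
have [->|ne] := eqVneq j (size p).-1; first by rewrite -lead_coefE.
by rewrite nth_default ?der0 // -(prednK sp) ltn_neqAle eq_sym ne.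
Qed.

Hypothesis hchar : char0 K.

Record dsubfield (E : K -> Prop) : Prop := DSubfield {
  dsubfield_subring : subring_pred E;
  dsubfieldV : forall a, E a -> E a^-1;
  dsubfield_der : forall a, E a -> E (D a);
  dsubfield_const : forall c, D c = 0 -> E c }.

Lemma poly_over_pder E b p :
  dsubfield E -> E b -> poly_over E p -> poly_over E (pder b p).
Proof.
move=> hE hb hp; have R := dsubfield_subring hE.
apply: (subringD (poly_over_subring R)).
  by apply: poly_over_map; [apply: der0 | apply: (dsubfield_der hE) |].
by apply: (poly_overZ R) => //; apply: (poly_over_deriv R).
Qed.

(* [y + v / (n.+1 u)] is a constant, hence lies in [E]. *)
Lemma der_rel_mem E y u v n : dsubfield E -> E u -> E v -> u != 0 -> D u = 0 ->
  D v + D y * (u *+ n.+1) = 0 -> E y.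
Proof.
move=> hE hu hv u0 du rel; have R := dsubfield_subring hE.
have un0 : u *+ n.+1 != 0 by rewrite -mulr_natr mulf_neq0.
have dun : D (u *+ n.+1) = 0 by rewrite -mulr_natr derMl_const ?der_nat // du mul0r.
have dc : D (y + v / (u *+ n.+1)) = 0.
  rewrite derD derMl_const ?derV_const //.
  have -> : D v = - (D y * (u *+ n.+1)) by apply/eqP; rewrite -addr_eq0 rel.
  by rewrite mulNr mulfK // subrr.
rewrite -(addrK (v / (u *+ n.+1)) y); apply: (subringB R).
  exact: (dsubfield_const hE).
by apply: (subringM R) => //; apply: (dsubfieldV hE); apply: (subringMn R).
Qed.

Definition algebraic_over (E : K -> Prop) y :=
  exists p : {poly K}, [/\ p != 0, poly_over E p & root p y].

Lemma algebraic_integral_mem E y :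
  dsubfield E -> E (D y) -> algebraic_over E y -> E y.
Proof.
move=> hE hy [p [p0 hp py]]; have R := dsubfield_subring hE.
elim: {p}(size p) {-2}p (leqnn (size p)) p0 hp py => [|n IHn] p sp p0 hp py.
  by move: sp; rewrite leqn0 size_poly_eq0 (negbTE p0).
have l0 : lead_coef p != 0 by rewrite lead_coef_eq0.
pose q := (lead_coef p)^-1 *: p.
have q0 : q != 0 by rewrite scaler_eq0 negb_or invr_eq0 l0.
have lq : lead_coef q = 1 by rewrite lead_coefZ mulVf.
have hq : poly_over E q by apply: (poly_overZ R) => //; apply: (dsubfieldV hE); apply: hp.
have qy : root q y by rewrite rootE hornerZ (rootP py) mulr0.
have ry : root (pder (D y) q) y by rewrite rootE -der_horner (rootP qy) der0.
(* As [q] is monic, [pder (D y) q] is a smaller annihilator of [y], or [0]. *)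
have [r0|rn0] := eqVneq (pder (D y) q) 0; last first.
  apply: (IHn _ _ rn0 (poly_over_pder hE hy hq) ry).
  rewrite -ltnS (leq_trans _ sp) // -(size_scale p (invr_neq0 l0)).
  by apply: size_pder_lt; rewrite // lq der1.
have := root_size_gt1 q0 qy; case sq: (size q) => [|[|m]] // _.
have := coef_pder (D y) q m; rewrite r0 coef0 => /esym.
have -> : q`_m.+1 = 1 by rewrite -lq lead_coefE sq.
by apply: der_rel_mem; rewrite ?der1 ?oner_eq0 //; apply: (subring1 R).
Qed.

Lemma size_wronskian_lt b (r q : {poly K}) : q != 0 -> (size r < size q)%N ->
  (size (pder b r * q - r * pder b q)%R < size (q * q)%R)%N.
Proof.
move=> q0 rq; rewrite size_mul //; apply: leq_ltn_trans (size_polyD _ _) _.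
have lt_qq m n : (m <= size r)%N -> (n <= size q)%N ->
    ((m + n).-1 < (size q + size q).-1)%N.
  by rewrite -!subn1; move: rq; clear; lia.
rewrite size_polyN gtn_max; apply/andP; split.
  exact: leq_ltn_trans (size_polyMleq _ _) (lt_qq _ _ (size_pder b r) (leqnn _)).
exact: leq_ltn_trans (size_polyMleq _ _) (lt_qq _ _ (leqnn _) (size_pder b q)).
Qed.

(** * Adjoining a first integral *)

Definition adjoin (E : K -> Prop) (Y z : K) := exists p q : {poly K},
  [/\ poly_over E p, poly_over E q, q.[Y] != 0 & z = p.[Y] / q.[Y]].

Section Adjoin.
Variables (E : K -> Prop) (Y : K).
Hypotheses (hE : dsubfield E) (hY : E (D Y)).
Let R := dsubfield_subring hE.
Let PR := poly_over_subring R.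

Lemma adjoin_mem z : E z -> adjoin E Y z.
Proof.
move=> hz; exists z%:P, 1; split; rewrite ?hornerC ?divr1 ?oner_eq0 //.
  exact: (poly_overC R).
exact: (subring1 PR).
Qed.

Lemma adjoin_var : adjoin E Y Y.
Proof.
exists 'X, 1; split; rewrite ?hornerX ?hornerC ?divr1 ?oner_eq0 //.
  exact: (poly_overX R).
exact: (subring1 PR).
Qed.

Lemma adjoin_dsubfield : dsubfield (adjoin E Y).
Proof.
split; first split.
- by apply: adjoin_mem; apply: (subring0 R).
- by apply: adjoin_mem; apply: (subring1 R).
- move=> _ _ [p1 [q1 [hp1 hq1 q1Y ->]]] [p2 [q2 [hp2 hq2 q2Y ->]]].
  exists (p1 * q2 + p2 * q1), (q1 * q2); split.
  + by apply: (subringD PR); apply: (subringM PR).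
  + exact: (subringM PR).
  + by rewrite hornerM mulf_neq0.
  + by rewrite hornerD !hornerM; field; apply/andP.
- move=> _ [p [q [hp hq qY ->]]]; exists (- p), q; split => //.
  + exact: (subringN PR).
  + by rewrite hornerN mulNr.
- move=> _ _ [p1 [q1 [hp1 hq1 q1Y ->]]] [p2 [q2 [hp2 hq2 q2Y ->]]].
  exists (p1 * p2), (q1 * q2); split.
  + exact: (subringM PR).
  + exact: (subringM PR).
  + by rewrite hornerM mulf_neq0.
  + by rewrite !hornerM; field; apply/andP.
- move=> _ [p [q [hp hq qY ->]]]; have [pY0|pY] := eqVneq p.[Y] 0.
    by rewrite pY0 mul0r invr0; apply: adjoin_mem; apply: (subring0 R).
  by exists q, p; split; rewrite ?invf_div.
- move=> _ [p [q [hp hq qY ->]]].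
  exists (pder (D Y) p * q - p * pder (D Y) q), (q * q); split.
  + by apply: (subringB PR); apply: (subringM PR) => //; apply: poly_over_pder.
  + exact: (subringM PR).
  + by rewrite hornerM mulf_neq0.
  + by rewrite der_div // hornerD hornerN !hornerM -!der_horner.
- by move=> c dc; apply: adjoin_mem; apply: (dsubfield_const hE).
Qed.

End Adjoin.

Lemma size_sub_lead_lt (p r : {poly K}) : p != 0 -> size r = size p ->
  lead_coef r = lead_coef p -> (size (p - r)%R < size p)%N.
Proof.
move=> p0 sr lr; have sp : (0 < size p)%N by rewrite size_poly_gt0.
rewrite -(prednK sp) ltnS; apply/leq_sizeP => j hj; rewrite coefB.
have [->|ne] := eqVneq j (size p).-1.
  by move: lr; rewrite !lead_coefE sr => ->; rewrite subrr.
by rewrite !nth_default ?subr0 // ?sr -(prednK sp) ltn_neqAle eq_sym ne.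
Qed.

Lemma poly_over_divmod E p q : dsubfield E -> poly_over E p -> poly_over E q ->
  q != 0 -> exists s r,
  [/\ poly_over E s, poly_over E r, p = s * q + r & (size r < size q)%N].
Proof.
move=> hE hp hq q0; have R := dsubfield_subring hE; have PR := poly_over_subring R.
elim: {p}(size p) {-2}p (leqnn (size p)) hp => [|n IHn] p sp hp.
  exists 0, p; split; rewrite ?mul0r ?add0r //; first exact: (subring0 PR).
  by apply: leq_ltn_trans sp _; rewrite size_poly_gt0.
have [pq|qp] := ltnP (size p) (size q).
  by exists 0, p; split; rewrite ?mul0r ?add0r //; apply: (subring0 PR).
have p0 : p != 0 by rewrite -size_poly_gt0 (leq_trans _ qp) // size_poly_gt0.
pose t := (lead_coef p / lead_coef q) *: 'X^(size p - size q).
have ht : poly_over E t.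
  apply: (poly_overZ R); last by apply: (subringX PR); apply: (poly_overX R).
  by apply: (subringM R); [apply: hp | apply: (dsubfieldV hE); apply: hq].
have lt0 : lead_coef p / lead_coef q != 0 by rewrite mulf_neq0 ?invr_eq0 ?lead_coef_eq0.
have stq : size (t * q) = size p.
  by rewrite -scalerAl size_scale // mulrC size_mulXn // subnK.
have ltq : lead_coef (t * q) = lead_coef p.
  by rewrite -scalerAl lead_coefZ lead_coefM lead_coefXn mul1r divfK ?lead_coef_eq0.
have [s [r [hs hr e sr]]] : exists s r, [/\ poly_over E s, poly_over E r,
    p - t * q = s * q + r & (size r < size q)%N].
  apply: IHn; last by apply: (subringB PR) => //; apply: (subringM PR).
  by rewrite -ltnS (leq_trans _ sp) // size_sub_lead_lt.
exists (s + t), r; split => //; first exact: (subringD PR).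
by rewrite mulrDl addrAC -e subrK.
Qed.

Section Transcendental.
Variables (E : K -> Prop) (Y : K).
Hypotheses (hE : dsubfield E) (hY : E (D Y)) (nY : ~ E Y).
Let R := dsubfield_subring hE.
Let PR := poly_over_subring R.

Lemma poly_over_root_eq0 p : poly_over E p -> root p Y -> p = 0.
Proof.
move=> hp pY; apply/eqP/negPn/negP => p0; apply: nY.
by apply: algebraic_integral_mem => //; exists p.
Qed.

Lemma pder_const_affine s a : poly_over E s -> pder (D Y) s = a%:P ->
  exists c e, [/\ D c = 0, E e & s.[Y] = e + c * Y].
Proof.
move=> hs ds.
have rel j : (0 < j)%N -> D s`_j + D Y * (s`_j.+1 *+ j.+1) = 0.
  by move=> j0; rewrite -coef_pder ds coefC; case: j j0.
have s2 : (size s <= 2)%N.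
  rewrite leqNgt; apply/negP; case sz: (size s) => [|[|[|m]]] // _.
  have l0 : s`_m.+2 != 0.
    by have := lead_coef_eq0 s; rewrite lead_coefE sz -size_poly_eq0 sz => ->.
  have dl : D s`_m.+2 = 0.
    by have := rel m.+2 isT; rewrite [s`_m.+3]nth_default ?sz // mul0rn mulr0 addr0.
  by apply: nY; apply: (der_rel_mem hE (hs _) (hs _) l0 dl (rel m.+1 isT)).
exists s`_1, s`_0; split; [|exact: hs|].
  by have := rel 1%N isT; rewrite [s`_2]nth_default // mul0rn mulr0 addr0.
by rewrite (horner_coef_wide _ s2) !big_ord_recl big_ord0 /= expr0 mulr1 expr1 addr0.
Qed.

Lemma pder_poly_part_eq s r q a : poly_over E s -> poly_over E r -> poly_over E q ->
  q.[Y] != 0 -> (size r < size q)%N ->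
  D (s.[Y] + r.[Y] / q.[Y]) = a -> E a -> pder (D Y) s = a%:P.
Proof.
move=> hs hr hq qY rq za ha.
have q0 : q != 0 by apply: contraNneq qY => ->; rewrite horner0.
pose w := pder (D Y) r * q - r * pder (D Y) q.
pose A := a%:P - pder (D Y) s.
have hA : poly_over E A.
  by apply: (subringB PR); [apply: (poly_overC R) | apply: poly_over_pder].
have hw : poly_over E w.
  by apply: (subringB PR); apply: (subringM PR) => //; apply: poly_over_pder.
have ea : a = (pder (D Y) s).[Y] + w.[Y] / (q.[Y] * q.[Y]).
  have -> : w.[Y] = D r.[Y] * q.[Y] - r.[Y] * D q.[Y].
    by rewrite /w !der_horner hornerD hornerN !hornerM.
  by rewrite -za derD der_div // (der_horner s).
have AY : root (A * (q * q) - w) Y.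
  rewrite rootE hornerD hornerN !hornerM hornerD hornerN hornerC ea.
  by rewrite addrAC subrr add0r divfK ?subrr ?mulf_neq0.
have /eqP := poly_over_root_eq0 (subringB PR (subringM PR hA (subringM PR hq hq)) hw) AY.
rewrite subr_eq0 => /eqP Aw.
apply/eqP; rewrite eq_sym -subr_eq0.
apply: contraTT (size_wronskian_lt (D Y) q0 rq) => A0.
rewrite -/w -Aw -leqNgt (size_mul A0) ?mulf_neq0 //.
by rewrite -(prednK (_ : 0 < size A)%N) ?size_poly_gt0 // addSn leq_addl.
Qed.

Lemma integral_adjoin_affine z : adjoin E Y z -> E (D z) ->
  exists c e, [/\ D c = 0, E e & z = e + c * Y].
Proof.
case=> p [q [hp hq qY ->]] hz.
have q0 : q != 0 by apply: contraNneq qY => ->; rewrite horner0.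
have [s [r [hs hr ep rq]]] := poly_over_divmod hE hp hq q0.
have ez : p.[Y] / q.[Y] = s.[Y] + r.[Y] / q.[Y] by rewrite ep hornerD hornerM; field.
rewrite ez in hz *.
have ds := pder_poly_part_eq hs hr hq qY rq erefl hz.
have [c [e [dc he eY]]] := pder_const_affine hs ds.
exists c, (r.[Y] / q.[Y] + e); split => //; last by rewrite eY; ring.
apply: (subringD R) => //; apply: (dsubfield_const hE).
have -> : D (r.[Y] / q.[Y]) = D (s.[Y] + r.[Y] / q.[Y]) - D s.[Y].
  by rewrite derD addrAC subrr add0r.
by rewrite (der_horner s) ds hornerC subrr.
Qed.

Lemma horner2_line_eq0 (P : {poly {poly K}}) A B p q :
  poly_over (poly_over E) P -> E A -> E B -> E p -> E q ->
  P.[B + q * Y, A + p * Y] = 0 -> forall t, P.[B + q * t, A + p * t] = 0.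
Proof.
move=> hP hA hB hp hq PY t.
have hL a b : E a -> E b -> poly_over E (a%:P + b *: 'X).
  move=> ha hb; apply: (subringD PR); first exact: (poly_overC R).
  by apply: (poly_overZ R) => //; apply: (poly_overX R).
have eL a b u : (a%:P + b *: 'X).[u] = a + b * u.
  by rewrite hornerD hornerC hornerZ hornerX.
have Phi0 : (map_poly (comp_poly (A%:P + p *: 'X)) P).[B%:P + q *: 'X] = 0.
  apply: poly_over_root_eq0; last by rewrite rootE horner2_comp !eL PY.
  apply: (poly_over_horner PR); last exact: hL.
  apply: (poly_over_map (E := poly_over E)) hP; first exact: comp_poly0.
  by move=> c hc; apply: (poly_over_comp R) => //; apply: hL.
by rewrite -!eL -horner2_comp Phi0 horner0.
Qed.

End Transcendental.

(** * Towers of first integrals *)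

Section Tower.
Variable kE : K -> Prop.
Hypothesis hk : dsubfield kE.
Let Rk := dsubfield_subring hk.

(* The head of [Ys] is the last element adjoined; [affine Ys z] says that [z]
   lies in [k + k Y_1 + ... + k Y_r]. *)
Fixpoint tower_field (Ys : seq K) : K -> Prop :=
  if Ys is Y :: Ys' then adjoin (tower_field Ys') Y else kE.

Fixpoint tower (Ys : seq K) : Prop :=
  if Ys is Y :: Ys' then [/\ tower Ys', kE (D Y) & ~ tower_field Ys' Y] else True.

Fixpoint affine (Ys : seq K) (z : K) : Prop :=
  if Ys is Y :: Ys' then exists c, kE c /\ affine Ys' (z - c * Y) else kE z.

Lemma tower_field_dsubfield Ys :
  tower Ys -> dsubfield (tower_field Ys) /\ forall z, kE z -> tower_field Ys z.
Proof.
elim: Ys => [|Y Ys IHYs] //= [/IHYs [hE kE_E] hY _].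
split; first exact: (adjoin_dsubfield hE (kE_E _ hY)).
by move=> z hz; apply: (adjoin_mem _ hE); apply: kE_E.
Qed.

Lemma tower_dsubfield Ys : tower Ys -> dsubfield (tower_field Ys).
Proof. by case/tower_field_dsubfield. Qed.

Lemma tower_field_base Ys z : tower Ys -> kE z -> tower_field Ys z.
Proof. by case/tower_field_dsubfield => _; apply. Qed.

Lemma affine_base Ys z : kE z -> affine Ys z.
Proof.
elim: Ys z => [|Y Ys IHYs] z hz //=; exists 0; split; first exact: (subring0 Rk).
by rewrite mul0r subr0; apply: IHYs.
Qed.

Lemma affineD Ys u v : affine Ys u -> affine Ys v -> affine Ys (u + v).
Proof.
elim: Ys u v => [|Y Ys IHYs] u v /=; first exact: (subringD Rk).
move=> [c [hc hu]] [d [hd hv]]; exists (c + d); split; first exact: (subringD Rk).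
by rewrite mulrDl opprD addrACA; apply: IHYs.
Qed.

Lemma affineZ Ys a u : kE a -> affine Ys u -> affine Ys (a * u).
Proof.
elim: Ys u => [|Y Ys IHYs] u ha /=; first exact: (subringM Rk).
move=> [c [hc hu]]; exists (a * c); split; first exact: (subringM Rk).
by rewrite -mulrA -mulrBr; apply: IHYs.
Qed.

Lemma affineB Ys u v : affine Ys u -> affine Ys v -> affine Ys (u - v).
Proof.
move=> hu hv; rewrite -mulN1r; apply: affineD => //.
by apply: affineZ => //; apply: (subringN Rk); apply: (subring1 Rk).
Qed.

Lemma affine_sum Ys (L : seq (K * K)) :
  (forall t, t \in L -> kE t.1 /\ affine Ys t.2) ->
  affine Ys (\sum_(t <- L) t.1 * t.2).
Proof.
move=> hL; rewrite big_seq; elim/big_ind: _ => [|u v|t /hL [ht1 ht2]].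
- exact/affine_base/(subring0 Rk).
- exact: affineD.
- exact: affineZ.
Qed.

Lemma affine_cons Ys Y z : affine Ys z -> affine (Y :: Ys) z.
Proof. by exists 0; split; [apply: (subring0 Rk) | rewrite mul0r subr0]. Qed.

Lemma affine_tower_field Ys z : tower Ys -> affine Ys z -> tower_field Ys z.
Proof.
elim: Ys z => [|Y Ys IHYs] z //= [hYs hY _] [c [hc hz]].
have hE := tower_dsubfield hYs.
have R := dsubfield_subring (adjoin_dsubfield hE (tower_field_base hYs hY)).
rewrite -(subrK (c * Y) z); apply: (subringD R); first exact/(adjoin_mem _ hE)/IHYs.
apply: (subringM R); last exact: adjoin_var.
exact/(adjoin_mem _ hE)/tower_field_base.
Qed.

Lemma integral_affine Ys J : tower Ys -> tower_field Ys J -> kE (D J) -> affine Ys J.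
Proof.
elim: Ys J => [|Y Ys IHYs] J //= [hYs hY nY] hJ dJ.
have hE := tower_dsubfield hYs.
have [c [e [dc he eJ]]] :=
  integral_adjoin_affine hE (tower_field_base hYs hY) nY hJ (tower_field_base hYs dJ).
exists c; split; first exact: (dsubfield_const hk).
rewrite eJ addrK; apply: IHYs => //.
have -> : D e = D J - c * D Y by rewrite eJ derD derMr_const // addrK.
by apply: (subringB Rk) => //; apply: (subringM Rk) => //; apply: (dsubfield_const hk).
Qed.

Lemma tower_exists (Js : seq K) : (forall J, J \in Js -> kE (D J)) ->
  exists Ys, tower Ys /\ forall J, J \in Js -> affine Ys J.
Proof.
elim: Js => [|J Js IHJs] dJs; first by exists [::].
have [Ys [hYs hJs]] : exists Ys, tower Ys /\ forall J, J \in Js -> affine Ys J.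
  by apply: IHJs => J' hJ'; apply: dJs; rewrite inE hJ' orbT.
have dJ : kE (D J) by apply: dJs; rewrite inE eqxx.
have [JE|nJE] := classic (tower_field Ys J).
  exists Ys; split => // J'; rewrite inE => /predU1P [->|]; last exact: hJs.
  exact: integral_affine.
exists (J :: Ys); split => // J'.
rewrite inE => /predU1P [->|/hJs]; last exact: affine_cons.
exists 1; split; first exact: (subring1 Rk).
by rewrite mul1r subrr; apply/affine_base/(subring0 Rk).
Qed.

(* If [c != 0], then [Y] is algebraic over [tower_field Ys], as [z] is and
   [z - c Y] lies there. *)
Lemma algebraic_affine_mem Ys z : tower Ys -> affine Ys z -> algebraic_over kE z -> kE z.
Proof.
elim: Ys z => [|Y Ys IHYs] z //= [hYs hY nY] [c [hc hw]] hz.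
have [c0|cn0] := eqVneq c 0; first by move: hw; rewrite c0 mul0r subr0 => hw; apply: IHYs.
have hE := tower_dsubfield hYs; have R := dsubfield_subring hE.
have hcV := dsubfieldV hE (tower_field_base hYs hc).
case: nY; apply: (algebraic_integral_mem hE (tower_field_base hYs hY)).
case: hz => p [p0 hp pz].
exists (p \Po (c *: ('X + ((z - c * Y) / c)%:P))); split.
- by rewrite -size_poly_eq0 size_comp_poly2 ?size_poly_eq0 // size_scale // size_XaddC.
- apply: (poly_over_comp R).
    by apply: poly_over_sub hp => a; apply: tower_field_base.
  apply: (poly_overZ R); first exact: tower_field_base.
  apply: (subringD (poly_over_subring R)); first exact: (poly_overX R).
  by apply: (poly_overC R); apply: (subringM R) => //; apply: affine_tower_field.
- rewrite rootE horner_comp hornerZ hornerD hornerX hornerC.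
  by rewrite mulrDr mulrCA mulfV ?mulr1 ?subrKC.
Qed.

Lemma line_root_slope_mem Ys A B p q (P : {poly {poly K}}) :
  tower Ys -> affine Ys A -> affine Ys B -> kE p -> kE q -> p != 0 ->
  P != 0 -> poly_over (poly_over kE) P ->
  (forall t, P.[B + q * t, A + p * t] = 0) -> kE (B - q / p * A).
Proof.
move=> hYs hA hB hp hq p0 P0 hP hPt.
have [n Pn0] := exists_nat_map_horner_eval_neq0 hchar P0.
pose lam := q / p.
have hlam : kE lam by apply: (subringM Rk) => //; apply: (dsubfieldV hk).
apply: (algebraic_affine_mem hYs); first by apply: affineB => //; apply: affineZ.
exists (map_poly (horner_eval n%:R) P \Po ('X + (lam * n%:R)%:P)); split.
- by rewrite -size_poly_eq0 size_comp_poly2 ?size_XaddC // size_poly_eq0.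
- apply: (poly_over_comp Rk).
    apply: (poly_over_map (E := poly_over kE)) hP; first by rewrite horner_evalE horner0.
    by move=> c hc; apply: (poly_over_horner Rk) => //; apply: (subring_nat Rk).
  apply: (subringD (poly_over_subring Rk)); first exact: (poly_overX Rk).
  by apply: (poly_overC Rk); apply: (subringM Rk) => //; apply: (subring_nat Rk).
(* At [t = (n - A) / p] the line passes through [(n, B - lam A + lam n)]. *)
rewrite rootE horner_comp hornerD hornerX hornerC -horner2E.
have := hPt ((n%:R - A) / p).
have -> : A + p * ((n%:R - A) / p) = n%:R by field.
have -> : B + q * ((n%:R - A) / p) = B - lam * A + lam * n%:R by rewrite /lam; field.
by move=> ->.
Qed.

Lemma line_root_combination Ys A B p q (P : {poly {poly K}}) :
  tower Ys -> affine Ys A -> affine Ys B -> kE p -> kE q -> (p != 0) || (q != 0) ->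
  P != 0 -> poly_over (poly_over kE) P ->
  (forall t, P.[B + q * t, A + p * t] = 0) ->
  exists u v,
    [/\ kE u, kE v, (u != 0) || (v != 0), u * p + v * q = 0 & kE (u * A + v * B)].
Proof.
move=> hYs; wlog p0 : A B p q P / p != 0.
  move=> gen hA hB hp hq pq P0 hP hPt; have [p0|p0] := eqVneq p 0; last first.
    exact: (gen A B p q P).
  have q0 : q != 0 by move: pq; rewrite p0 eqxx.
  have qp : (q != 0) || (p != 0) by rewrite q0.
  have S0 : swapXY P != 0 by rewrite swapXY_eq0.
  have hS : poly_over (poly_over kE) (swapXY P).
    by move=> i j; rewrite coef_swapXY; apply: hP.
  have hSt t : (swapXY P).[A + p * t, B + q * t] = 0 by rewrite horner2_swapXY.
  have [u [v [hu hv uv upq huv]]] := gen B A q p _ q0 hB hA hq hp qp S0 hS hSt.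
  by exists v, u; split; rewrite // 1?orbC // addrC.
move=> hA hB hp hq _ P0 hP hPt; exists (- (q / p)), 1.
split; rewrite ?oner_eq0 ?orbT //.
- by apply: (subringN Rk); apply: (subringM Rk) => //; apply: (dsubfieldV hk).
- exact: (subring1 Rk).
- by rewrite mul1r mulNr divfK // addNr.
by rewrite mulNr mul1r addrC; apply: (line_root_slope_mem hYs hA hB hp hq p0 P0 hP hPt).
Qed.

Lemma affine_alg_dependent Ys f g (P : {poly {poly K}}) :
  tower Ys -> affine Ys f -> affine Ys g -> P != 0 -> poly_over (poly_over kE) P ->
  P.[g, f] = 0 ->
  exists u v, [/\ kE u, kE v, (u != 0) || (v != 0) & kE (u * f + v * g)].
Proof.
move=> + + + P0 hP; elim: Ys f g => [|Y Ys IHYs] f g /=.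
  move=> _ hf _ _; exists 1, 0; rewrite oner_eq0 mul1r mul0r addr0.
  by split=> //; [apply: (subring1 Rk) | apply: (subring0 Rk)].
move=> [hYs hY nY] [p [hp hA]] [q [hq hB]] Pfg.
have [/andP [/eqP p0 /eqP q0]|pq] := boolP ((p == 0) && (q == 0)).
  by apply: IHYs => //; [move: hA | move: hB]; rewrite ?p0 ?q0 mul0r subr0.
have hE := tower_dsubfield hYs.
have hP' : poly_over (poly_over (tower_field Ys)) P.
  by move=> i j; apply: tower_field_base (hP i j).
have hPt t : P.[(g - q * Y) + q * t, (f - p * Y) + p * t] = 0.
  apply: (horner2_line_eq0 hE (tower_field_base hYs hY) nY hP'); rewrite ?subrK //;
    by [apply: affine_tower_field | apply: tower_field_base].
have pq' : (p != 0) || (q != 0) by rewrite -negb_and.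
have [u [v [hu hv uv upq huv]]] := line_root_combination hYs hA hB hp hq pq' P0 hP hPt.
exists u, v; split => //.
have -> : u * f + v * g = u * (f - p * Y) + v * (g - q * Y) + (u * p + v * q) * Y.
  by ring.
by rewrite upq mul0r addr0.
Qed.

Lemma first_integral_sums_dependent (Lf Lg : seq (K * K)) f g (P : {poly {poly K}}) :
  (forall t, t \in Lf ++ Lg -> kE t.1 /\ kE (D t.2)) ->
  f = \sum_(t <- Lf) t.1 * t.2 -> g = \sum_(t <- Lg) t.1 * t.2 ->
  P != 0 -> poly_over (poly_over kE) P -> P.[g, f] = 0 ->
  exists u v, [/\ kE u, kE v, (u != 0) || (v != 0) & kE (u * f + v * g)].
Proof.
move=> hL ef eg.
have dJs J : J \in [seq t.2 | t <- Lf ++ Lg] -> kE (D J).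
  by case/mapP => t /hL [_ dJ] ->.
have [Ys [hYs hJ]] := tower_exists dJs.
have affL L : {subset L <= Lf ++ Lg} -> affine Ys (\sum_(t <- L) t.1 * t.2).
  move=> sL; apply: affine_sum => t /sL tL; split; first by case: (hL t tL).
  by apply: hJ; apply: map_f.
apply: (affine_alg_dependent hYs) => //; rewrite ?ef ?eg; apply: affL => t ht;
  by rewrite mem_cat ht ?orbT.
Qed.

End Tower.

(** * Iterated integrals *)

Section IteratedIntegrals.
Variables (kE : K -> Prop) (x : K).
Hypotheses (hk : dsubfield kE) (hx : kE x) (hx' : D x = 1).
Let Rk := dsubfield_subring hk.

Lemma der_monomial c j J : D c = 0 ->
  D (c / j.+1%:R * x ^+ j.+1 * J) = c * x ^+ j * J + c / j.+1%:R * x ^+ j.+1 * D J.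
Proof.
move=> dc; rewrite derM derM der_divn_const // derX hx' mul0r add0r mulr1; field.
by rewrite nat1r; apply: hchar.
Qed.

(* Integration by parts: if [D f = \sum c x^j J], then
   [f - \sum c x^(j+1) / (j+1) J] has its derivative in [k]. *)
Lemma iterated_integral_monomials m f : kE (iter m D f) ->
  exists L : seq (K * nat * K), (forall t, t \in L -> D t.1.1 = 0 /\ kE (D t.2)) /\
    f = \sum_(t <- L) t.1.1 * x ^+ t.1.2 * t.2.
Proof.
elim: m f => [|m IHm] f /= hf.
  exists [:: (1, 0%N, f)]; split; last by rewrite big_seq1 expr0 !mul1r.
  move=> t; rewrite inE => /eqP -> /=.
  by split; [apply: der1 | apply: (dsubfield_der hk)].
move: hf; rewrite -iterS iterSr => /IHm [L [hL eL]].
pose F := \sum_(t <- L) t.1.1 / t.1.2.+1%:R * x ^+ t.1.2.+1 * t.2.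
have dF : D F = D f + \sum_(t <- L) t.1.1 / t.1.2.+1%:R * x ^+ t.1.2.+1 * D t.2.
  rewrite der_sum eL -big_split /=; apply: eq_big_seq => t tL.
  by apply: der_monomial; case: (hL t tL).
exists ((1, 0%N, f - F) :: [seq (t.1.1 / t.1.2.+1%:R, t.1.2.+1, t.2) | t <- L]).
split; last by rewrite big_cons big_map /= expr0 !mul1r subrK.
move=> t; rewrite inE => /predU1P [-> | /mapP [s sL ->]] /=; last first.
  by have [ds dJ] := hL s sL; split => //; apply: der_divn_const.
split; first exact: der1.
rewrite derB dF opprD addrA subrr add0r; apply: (subringN Rk).
rewrite big_seq; apply: (subring_sum Rk) => s sL; have [ds dJ] := hL s sL.
apply: (subringM Rk) => //; apply: (subringM Rk); last exact: (subringX Rk).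
exact/(dsubfield_const hk)/der_divn_const.
Qed.

Lemma iterated_integral_span m f : kE (iter m D f) ->
  exists L : seq (K * K), (forall t, t \in L -> kE t.1 /\ kE (D t.2)) /\
    f = \sum_(t <- L) t.1 * t.2.
Proof.
case/iterated_integral_monomials => L [hL ->].
exists [seq (t.1.1 * x ^+ t.1.2, t.2) | t <- L]; rewrite big_map; split => //.
move=> _ /mapP [t /hL [dc dJ] ->]; split => //=.
by apply: (subringM Rk); [apply: (dsubfield_const hk) | apply: (subringX Rk)].
Qed.

End IteratedIntegrals.

End Derivation.

Theorem corollary32 (K : fieldType) (D : K -> K) (k : pred K)
  (hD : is_derivation D) (hchar : char0 K)
  (hk : is_diff_subfield D k)
  (hconst : forall c : K, is_const D c -> c \in k)
  (hC : consts_alg_closed D)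
  (x : K) (hx : x \in k) (hx' : D x = 1)
  (f g : K) (hf : iterated_integral D k f) (hg : iterated_integral D k g)
  (hdep : alg_dependent2 k f g) :
  exists u v : K, [/\ u \in k, v \in k, (u != 0) || (v != 0) & u * f + v * g \in k].
Proof.
pose kE z := z \in k.
have hkE : dsubfield D kE.
  by case: hk => [[k0 k1 kD] [kN kM kV kder]]; split; first split.
have span := iterated_integral_span hD hchar hkE hx hx'.
case: hf => m /span [Lf [hLf ef]]; case: hg => n /span [Lg [hLg eg]].
case: hdep => P [P0 hP Pfg].
apply: (first_integral_sums_dependent hD hchar hkE _ ef eg P0) => //.
by move=> t; rewrite mem_cat => /orP [/hLf | /hLg].
Qed.
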